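(* Let $m,v,x,s>0$ and $u,w\in\mathbb{R}$ with $w\geq 0$. Let $\mathfrak{n}$ be the five-dimensional real Lie algebra with basis $\{E_1,\dots,E_5\}$ whose only non-vanishing brackets (up to antisymmetry) are $$[E_1,E_2]=mE_3+sE_4+uE_5,\qquad [E_1,E_3]=vE_4+wE_5,\qquad [E_1,E_4]=xE_5.$$ Equip the corresponding simply connected nilpotent Lie group with the left-invariant Riemannian metric for which $\{E_1,\dots,E_5\}$ is orthonormal. Then this metric is not an algebraic Ricci soliton.
   Context: Let $G$ be a Lie group with Lie algebra $\mathfrak{g}$ and let $g$ be a left-invariant Riemannian metric on $G$. Let $\mathrm{Ric}$ denote the $(1,1)$ Ricci tensor of $g$, viewed as a linear endomorphism of $\mathfrak{g}$. The metric $g$ is an algebraic Ricci soliton if there are a real number $c$ and a derivation $D$ of $\mathfrak{g}$ such that $\mathrm{Ric}=c\,\mathrm{Id}+D$. *)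

(* Left-invariant metrics on a Lie group are handled at the
   Lie-algebra level: g = R^n (row vectors) with a bracket given by structure
   constants on the basis e_0..e_{n-1}, which is declared orthonormal. *)
From HB Require Import structures.
From mathcomp Require Import all_boot all_order all_algebra.
Set Implicit Arguments. Unset Strict Implicit. Unset Printing Implicit Defensive.
Import Order.TTheory GRing.Theory Num.Theory.
Local Open Scope ring_scope.

Section LieMetric.
Variable R : realFieldType.
Variable n : nat.
(* cst i j = [e_i, e_j] *)
Variable cst : 'I_n -> 'I_n -> 'rV[R]_n.

Definition ev (i : 'I_n) : 'rV[R]_n := delta_mx 0 i.

Definition vdot (a b : 'rV[R]_n) : R := \sum_i a 0 i * b 0 i.

Definition br (a b : 'rV[R]_n) : 'rV[R]_n :=
  \sum_i \sum_j (a 0 i * b 0 j) *: cst i j.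

(* Levi-Civita connection of the left-invariant metric (Koszul formula):
   <nabla_X Y, Z> = 1/2 (<[X,Y],Z> - <[Y,Z],X> + <[Z,X],Y>) *)
Definition nabla (a b : 'rV[R]_n) : 'rV[R]_n :=
  \sum_k (2^-1 * (vdot (br a b) (ev k) - vdot (br b (ev k)) a
                  + vdot (br (ev k) a) b)) *: ev k.

Definition curv (a b c : 'rV[R]_n) : 'rV[R]_n :=
  nabla a (nabla b c) - nabla b (nabla a c) - nabla (br a b) c.

Definition ric (b c : 'rV[R]_n) : R := \sum_i vdot (curv (ev i) b c) (ev i).

Definition Ric (b : 'rV[R]_n) : 'rV[R]_n := \sum_k ric b (ev k) *: ev k.

Definition is_derivation (D : 'M[R]_n) : Prop :=
  forall a b, br a b *m D = br (a *m D) b + br a (b *m D).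

Definition algebraic_ricci_soliton : Prop :=
  exists (c : R) (D : 'M[R]_n), is_derivation D /\
    forall a, Ric a = c *: a + a *m D.
End LieMetric.

(* The five-dimensional nilpotent Lie algebra n; E_{k+1} is ev k (0-indexed):
   [E1,E2] = m E3 + s E4 + u E5, [E1,E3] = v E4 + w E5, [E1,E4] = x E5. *)
Definition n5_bracket (R : realFieldType) (m s u v w x : R)
    (i j : 'I_5) : 'rV[R]_5 :=
  let e := @ev R 5 in
  match (nat_of_ord i, nat_of_ord j) return 'rV[R]_5 with
  | (0, 1)%N => m *: e (inord 2) + s *: e (inord 3) + u *: e (inord 4)
  | (1, 0)%N => - (m *: e (inord 2) + s *: e (inord 3) + u *: e (inord 4))
  | (0, 2)%N => v *: e (inord 3) + w *: e (inord 4)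
  | (2, 0)%N => - (v *: e (inord 3) + w *: e (inord 4))
  | (0, 3)%N => x *: e (inord 4)
  | (3, 0)%N => - (x *: e (inord 4))
  | _ => 0
  end.

(* Writing rho for the Ricci form, the soliton equation Ric = c Id + D makes
   D = rho - c Id a derivation.  Evaluated on [E1,E4] = x E5 and [E1,E3] = v E4 + w E5,
   three components of the derivation identity involve no c at all and read
     x rho(E5,E3) = m rho(E4,E2),
     x rho(E5,E4) = s rho(E4,E2) + v rho(E4,E3),
     v rho(E4,E3) + w rho(E5,E3) = m rho(E3,E2).
   With the Ricci entries computed from the Koszul formula, the first gives m x u = 0,
   so u = 0, and the other two then add up to v (x w + m s) = 0, impossible since
   v, m, s > 0 and x w >= 0. *)
From HB Require Import structures.
From mathcomp Require Import all_boot all_order all_algebra ring lra.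
Import Order.TTheory GRing.Theory Num.Theory.
Local Open Scope ring_scope.
Set Implicit Arguments. Unset Strict Implicit.

Section Coordinates.
Variables (R : realFieldType) (n : nat) (cst : 'I_n -> 'I_n -> 'rV[R]_n).
Local Notation e := (ev R).

Lemma evE (i j : 'I_n) : e i 0 j = (i == j)%:R.
Proof. by rewrite /ev mxE eqxx eq_sym. Qed.

Lemma sum_delta_r (f : 'I_n -> R) k : \sum_i f i * (i == k)%:R = f k.
Proof.
rewrite (bigD1 k) //= eqxx mulr1 big1 ?addr0 // => i /negbTE ->.
by rewrite mulr0.
Qed.

Lemma sum_delta_l (f : 'I_n -> R) k : \sum_i (k == i)%:R * f i = f k.
Proof.
by rewrite -[RHS](sum_delta_r f k); apply: eq_bigr => i _; rewrite mulrC eq_sym.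
Qed.

Lemma vdot_evr (a : 'rV[R]_n) k : vdot a (e k) = a 0 k.
Proof. by rewrite /vdot; under eq_bigr do rewrite evE eq_sym; exact: sum_delta_r. Qed.

Lemma sum_ev_coord (r : 'I_n -> R) l : (\sum_k r k *: e k) 0 l = r l.
Proof. by rewrite summxE; under eq_bigr do rewrite mxE evE; exact: sum_delta_r. Qed.

Lemma mul_ev_mx (D : 'M[R]_n) k l : (e k *m D) 0 l = D k l.
Proof. by rewrite mxE -(sum_delta_l (D^~ l) k); apply: eq_bigr => j _; rewrite evE. Qed.

Lemma br_coord (a b : 'rV[R]_n) q :
  br cst a b 0 q = \sum_i \sum_j a 0 i * b 0 j * cst i j 0 q.
Proof.
rewrite /br summxE; apply: eq_bigr => i _; rewrite summxE.
by apply: eq_bigr => j _; rewrite mxE.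
Qed.

Lemma br_evr (a : 'rV[R]_n) k q : br cst a (e k) 0 q = \sum_i a 0 i * cst i k 0 q.
Proof.
rewrite br_coord; apply: eq_bigr => i _.
rewrite -(sum_delta_r (fun j => a 0 i * cst i j 0 q) k).
by apply: eq_bigr => j _; rewrite evE eq_sym; ring.
Qed.

Lemma br_evl (b : 'rV[R]_n) k q : br cst (e k) b 0 q = \sum_j b 0 j * cst k j 0 q.
Proof.
rewrite br_coord exchange_big; apply: eq_bigr => j _.
rewrite -(sum_delta_l (fun i => b 0 j * cst i j 0 q) k).
by apply: eq_bigr => i _; rewrite evE; ring.
Qed.

Lemma br_ev (k l p : 'I_n) : br cst (e k) (e l) 0 p = cst k l 0 p.
Proof.
by rewrite br_evl -(sum_delta_l (fun t => cst k t 0 p) l); apply: eq_bigr => t _; rewrite evE.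
Qed.

(* For the structure constants [f i j q = <[e_i, e_j], e_q>], [christoffel f i j q]
   is the e_q-component of nabla_{e_i} e_j. *)
Definition christoffel (f : 'I_n -> 'I_n -> 'I_n -> R) i j q : R :=
  2^-1 * (f i j q - f j q i + f q i j).
Local Notation gamma := (christoffel (fun i j q => cst i j 0 q)).

Lemma nabla_coord (a b : 'rV[R]_n) q :
  nabla cst a b 0 q = \sum_i \sum_j a 0 i * b 0 j * gamma i j q.
Proof.
rewrite /nabla sum_ev_coord !vdot_evr br_coord /vdot.
under [X in _ - X + _]eq_bigr do rewrite br_evr mulr_suml.
under [X in _ + X]eq_bigr do rewrite br_evl mulr_suml.
rewrite [X in _ + X]exchange_big /=.
rewrite -sumrN -!big_split /= mulr_sumr; apply: eq_bigr => i _.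
rewrite -sumrN -!big_split /= mulr_sumr; apply: eq_bigr => j _.
rewrite /christoffel; ring.
Qed.

Lemma nabla_evl i (b : 'rV[R]_n) q :
  nabla cst (e i) b 0 q = \sum_j b 0 j * gamma i j q.
Proof.
rewrite nabla_coord exchange_big; apply: eq_bigr => j _.
rewrite -(sum_delta_l (fun t => b 0 j * gamma t j q) i).
by apply: eq_bigr => t _; rewrite evE; ring.
Qed.

Lemma nabla_evr (a : 'rV[R]_n) l q :
  nabla cst a (e l) 0 q = \sum_p a 0 p * gamma p l q.
Proof.
rewrite nabla_coord; apply: eq_bigr => p _.
rewrite -(sum_delta_r (fun t => a 0 p * gamma p t q) l).
by apply: eq_bigr => t _; rewrite evE eq_sym; ring.
Qed.

Lemma nabla_ev (k l p : 'I_n) : nabla cst (e k) (e l) 0 p = gamma k l p.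
Proof.
rewrite nabla_evl -(sum_delta_l (gamma k ^~ p) l).
by apply: eq_bigr => t _; rewrite evE.
Qed.

Lemma ric_ev_gamma (k l : 'I_n) :
  ric cst (e k) (e l) = \sum_i (\sum_p gamma k l p * gamma i p i
    - \sum_p gamma i l p * gamma k p i - \sum_p cst i k 0 p * gamma p l i).
Proof.
rewrite /ric; apply: eq_bigr => i _; rewrite vdot_evr /curv !mxE.
rewrite !nabla_evl nabla_evr.
by congr (_ - _ - _); apply: eq_bigr => p _; rewrite ?nabla_ev ?br_ev.
Qed.

Lemma ric_ev (f : 'I_n -> 'I_n -> 'I_n -> R) (k l : 'I_n) :
  (forall i j q, cst i j 0 q = f i j q) ->
  ric cst (e k) (e l) = \sum_i (\sum_p christoffel f k l p * christoffel f i p i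
    - \sum_p christoffel f i l p * christoffel f k p i
    - \sum_p f i k p * christoffel f p l i).
Proof.
move=> cstE; rewrite ric_ev_gamma; apply: eq_bigr => i _.
by congr (_ - _ - _); apply: eq_bigr => p _; rewrite /christoffel !cstE.
Qed.

Lemma derivation_ev (D : 'M[R]_n) p r q : is_derivation cst D ->
  \sum_j cst p r 0 j * D j q =
  \sum_j D p j * cst j r 0 q + \sum_j D r j * cst p j 0 q.
Proof.
move=> /(_ (e p) (e r)) /(congr1 (fun M : 'rV_n => M 0 q)) /=.
rewrite mxE [X in _ = X]mxE br_evr br_evl.
under [in X in X = _]eq_bigr do rewrite br_ev.
under [in X in _ = X + _]eq_bigr do rewrite mul_ev_mx.
by under [in X in _ = _ + X]eq_bigr do rewrite mul_ev_mx.
Qed.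

(* The c Id part of D drops out except for one multiple of the bracket. *)
Lemma soliton_ric_ev : algebraic_ricci_soliton cst -> exists c : R, forall p r q,
  \sum_j cst p r 0 j * ric cst (e j) (e q)
  - \sum_j ric cst (e p) (e j) * cst j r 0 q
  - \sum_j ric cst (e r) (e j) * cst p j 0 q = - c * cst p r 0 q.
Proof.
move=> [c [D [derD RicD]]]; exists c => p r q.
have DE k l : D k l = ric cst (e k) (e l) - c * (k == l)%:R.
  have := congr1 (fun M : 'rV_n => M 0 l) (RicD (e k)).
  by rewrite /Ric sum_ev_coord mxE mul_ev_mx mxE evE => ->; ring.
have := derivation_ev p r q derD.
under eq_bigr do rewrite DE mulrBr.
under [in X in _ = X + _]eq_bigr do rewrite DE mulrBl.
under [in X in _ = _ + X]eq_bigr do rewrite DE mulrBl.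
rewrite !sumrB.
under [X in _ - X = _]eq_bigr do rewrite mulrCA.
under [X in _ = _ - X + _]eq_bigr do rewrite -mulrA.
under [X in _ = _ + (_ - X)]eq_bigr do rewrite -mulrA.
rewrite -!mulr_sumr sum_delta_r !sum_delta_l.
lra.
Qed.

End Coordinates.

(* The structure constants of n5, indexed from 0: [n5_const i j q] is the
   E_{q+1}-component of [E_{i+1}, E_{j+1}]. *)
Definition n5_const (R : realFieldType) (m s u v w x : R) (i j q : nat) : R :=
  match i, j, q with
  | 0%N, 1%N, 2%N => m | 0%N, 1%N, 3%N => s | 0%N, 1%N, 4%N => u
  | 1%N, 0%N, 2%N => - m | 1%N, 0%N, 3%N => - s | 1%N, 0%N, 4%N => - u
  | 0%N, 2%N, 3%N => v | 0%N, 2%N, 4%N => w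
  | 2%N, 0%N, 3%N => - v | 2%N, 0%N, 4%N => - w
  | 0%N, 3%N, 4%N => x | 3%N, 0%N, 4%N => - x
  | _, _, _ => 0
  end.

Lemma n5_bracketE (R : realFieldType) (m s u v w x : R) (i j q : 'I_5) :
  n5_bracket m s u v w x i j 0 q = n5_const m s u v w x i j q.
Proof.
have inordE (k : nat) (t : 'I_5) : (k < 5)%N -> (t == inord k) = (val t == k).
  by move=> lt_k5; rewrite -val_eqE /= inordK.
rewrite /n5_bracket.
case: i => [[|[|[|[|[|i]]]]] ?] //; case: j => [[|[|[|[|[|j]]]]] ?] //=;
  rewrite ?mxE ?evE ?inordE //; case: q => [[|[|[|[|[|q]]]]] ?] //=; ring.
Qed.

Local Notation o0 := (@Ordinal 5 0 isT).
Local Notation o1 := (@Ordinal 5 1 isT).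
Local Notation o2 := (@Ordinal 5 2 isT).
Local Notation o3 := (@Ordinal 5 3 isT).
Local Notation o4 := (@Ordinal 5 4 isT).

Lemma big_ord5 (R : realFieldType) (f : 'I_5 -> R) :
  \sum_i f i = f o0 + f o1 + f o2 + f o3 + f o4.
Proof.
rewrite !big_ord_recl big_ord0 addr0 !addrA.
by repeat congr (_ + _); congr f; apply: val_inj.
Qed.

Section N5Ricci.
Variables (R : realFieldType) (m s u v w x : R).
Local Notation rho k l := (ric (n5_bracket m s u v w x) (ev R k) (ev R l)).

Ltac ricci_entry :=
  rewrite (ric_ev _ _ (@n5_bracketE R m s u v w x)) !big_ord_recl !big_ord0 /christoffel /=;
  field.

Lemma n5_ric42 : rho o4 o2 = m * u / 2. Proof. by ricci_entry. Qed.
Lemma n5_ric31 : rho o3 o1 = - (u * x) / 2. Proof. by ricci_entry. Qed.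
Lemma n5_ric43 : rho o4 o3 = (s * u + v * w) / 2. Proof. by ricci_entry. Qed.
Lemma n5_ric32 : rho o3 o2 = (m * s - w * x) / 2. Proof. by ricci_entry. Qed.
Lemma n5_ric21 : rho o2 o1 = - (s * v + u * w) / 2. Proof. by ricci_entry. Qed.

End N5Ricci.

Theorem mainTheorem5 (R : realFieldType) (m v x s u w : R)
  (hm : 0 < m) (hv : 0 < v) (hx : 0 < x) (hs : 0 < s) (hw : 0 <= w) :
  ~ algebraic_ricci_soliton (n5_bracket m s u v w x).
Proof.
move=> /soliton_ric_ev [c soliton].
have := soliton o0 o3 o2; have := soliton o0 o3 o3; have := soliton o0 o2 o2.
rewrite !big_ord5 !n5_bracketE /= n5_ric42 n5_ric31 n5_ric43 n5_ric32 n5_ric21.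
(* The Ricci entries left over all carry a zero coefficient; abstracting them
   keeps the arithmetic tactics from unfolding [ric]. *)
move: (ric (n5_bracket m s u v w x)) => rho E022 E033 E032.
have u0 : u = 0.
  have : (m * x) * u = 0 by lra.
  by move/eqP; rewrite !mulf_eq0 (gt_eqF hm) (gt_eqF hx) => /eqP.
have : v * (x * w + m * s) = 0 by rewrite u0 in E022 E033; lra.
move/eqP; rewrite mulf_eq0 (gt_eqF hv) /= => /eqP.
have := mulr_ge0 (ltW hx) hw; have := mulr_gt0 hm hs; lra.
Qed.
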